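(* Let $G$ be a factor graph with evidence $\mathbf{E}$ in which all factors are known. Then the colour passing (CP) algorithm and the LIFG algorithm (for any threshold $\theta\in[0,1]$) output identical groupings of random variables and of factors, respectively.
   Context: A factor graph (FG) is a bipartite undirected graph with variable nodes (random variables, each with a finite range $\mathcal R(R)$, possibly observed as evidence) and factor nodes; a factor $f$ has an ordered argument list of random variables (its neighbours) and, if known, a potential function mapping each joint assignment of its arguments to a positive real; an unknown factor is one whose potential mapping is not known. $\mathrm{Ne}_G(v)$ denotes the neighbours of node $v$. The 2-step neighbourhood of a factor $f$ is $\mathrm{Ne}^2(f)=\mathrm{Ne}_G(f)\cup\{f' : \exists R\in \mathrm{Ne}_G(f),\ f'\in\mathrm{Ne}_G(R)\}$. For factors $f_i,f_j$, their induced 2-step neighbourhoods are symmetric if $|\mathrm{Ne}_G(f_i)|=|\mathrm{Ne}_G(f_j)|$ and there is a bijection $\mathrm{Ne}_G(f_i)\to\mathrm{Ne}_G(f_j)$ mapping each $R_k$ to some $R_\ell$ with identical evidence, equal ranges, and $|\mathrm{Ne}_G(R_k)|=|\mathrm{Ne}_G(R_\ell)|$; $f_i\approx f_j$ (possibly identical) if their induced 2-step neighbourhoods are symmetric and either one of them is unknown or both have the same potentials. The colour passing (CP) algorithm: random variables are initially coloured so that variables with identical range and identical evidence share a colour; factors are initially coloured so that factors with identical potentials share a colour (or given initial colours). Then repeatedly: each factor receives the colours of its argument variables (in order) and is recoloured according to this signature together with its own colour; each variable receives the pairs (colour of neighbouring factor, its position in that factor's argument list) and is recoloured according to this signature together with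 its own colour; iterate until the colour-class partitions no longer change, and group variables and factors by final colour. The LIFG algorithm, with input $G,\mathbf{E}$ and threshold $\theta\in[0,1]$: (1) assign each known factor a colour based on its potentials; (2) assign each unknown factor a unique colour; (3) for each unknown factor $f_i$, set $C_{f_i}=\emptyset$, and for each factor $f_j\neq f_i$ with $f_i\approx f_j$: if $f_j$ is unknown assign $f_j$ the colour of $f_i$, otherwise add $f_j$ to $C_{f_i}$; (4) for each $C_{f_i}$, let $C^\ell_{f_i}$ be a maximal subset of $C_{f_i}$ whose elements are pairwise possibly identical, and if $|C^\ell_{f_i}|/|C_{f_i}|\ge\theta$ assign all factors in $C^\ell_{f_i}$ the colour of $f_i$; (5) run CP on $G$ with these factor colours and evidence $\mathbf{E}$, and output the resulting grouping. *)

From HB Require Import structures.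
From mathcomp Require Import all_boot all_order all_algebra.
From mathcomp Require Import reals.
Set Implicit Arguments. Unset Strict Implicit. Unset Printing Implicit Defensive.
Import Order.TTheory GRing.Theory Num.Theory.
Local Open Scope ring_scope.

(*  V : random variables, F : factors, D : the universe of values.    *)
(*  rng X   : the finite range of the random variable X (subset of D). *)
(*  args f  : the ordered argument list of f (its neighbours).         *)
(*  pot f   : Some phi if f is known (phi maps a joint assignment of   *)
(*            the arguments, given as a sequence of values, to a real),*)
(*            None if f is unknown.                                    *)
(*  Evidence E : V -> option D  (Some d = observed with value d).      *)
Record factorGraph (V F D : finType) (R : realType) := FactorGraph {
  rng : V -> {set D};
  args : F -> seq V;
  pot : F -> option (seq D -> R) }.

Section FG.
Variables (V F D : finType) (R : realType) (G : factorGraph V F D R).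
Variable E : V -> option D.

Definition known (f : F) : bool := isSome (pot G f).
Definition unknown (f : F) : bool := ~~ known f.

Definition valid_assign (f : F) (a : seq D) : bool :=
  (size a == size (args G f)) &&
  all (fun p => p.1 \in rng G p.2) (zip a (args G f)).

Definition wf_fg : Prop :=
  (forall f, uniq (args G f)) /\
  (forall X d, E X = Some d -> d \in rng G X) /\
  (forall f phi, pot G f = Some phi ->
     forall a, valid_assign f a -> 0 < phi a).

Definition same_pot (f g : F) : bool :=
  match pot G f, pot G g with
  | Some p, Some q =>
      (size (args G f) == size (args G g)) &&
      [forall t : (size (args G f)).-tuple D,
         (valid_assign f t == valid_assign g t) &&
         (valid_assign f t ==> (p t == q t))]
  | _, _ => false
  end.

Definition NeF (f : F) : {set V} := [set X | X \in args G f].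
Definition NeV (X : V) : {set F} := [set f | X \in args G f].

(* induced 2-step neighbourhoods of fi and fj are symmetric *)
Definition sym2 (fi fj : F) : bool :=
  (#|NeF fi| == #|NeF fj|) &&
  [exists g : {ffun V -> V},
     [&& [forall x in NeF fi, forall y in NeF fi, (g x == g y) ==> (x == y)],
         [forall x in NeF fi, g x \in NeF fj],
         [forall y in NeF fj, exists x in NeF fi, g x == y] &
         [forall x in NeF fi,
            [&& E (g x) == E x, rng G (g x) == rng G x &
                #|NeV (g x)| == #|NeV x|]]]].

Definition poss_ident (fi fj : F) : bool :=
  sym2 fi fj && [|| unknown fi, unknown fj | same_pot fi fj].

(* Colour passing.  Colours are represented by canonical               *)
(* representatives (variables coloured by elements of V, factors by    *)
(* elements of F); a recolouring picks the first element with the same *)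
(* signature, so two nodes get the same new colour iff their           *)
(* signatures (own colour + received colours) coincide.                *)
Definition init_varcol (X : V) : V :=
  odflt X [pick Y | (rng G Y == rng G X) && (E Y == E X)].

Definition factor_step (cV : V -> V) (cF : F -> F) (f : F) : F :=
  odflt f [pick g | (cF g == cF f) && (map cV (args G g) == map cV (args G f))].

Definition var_sig (cF : F -> F) (X : V) : seq (F * nat) :=
  [seq (cF f, i) | f <- enum F,
                   i <- [seq i <- iota 0 (size (args G f)) | nth X (args G f) i == X]].

Definition var_step (cV : V -> V) (cF : F -> F) (X : V) : V :=
  odflt X [pick Y | (cV Y == cV X) && perm_eq (var_sig cF Y) (var_sig cF X)].

Definition cp_step (c : (V -> V) * (F -> F)) : (V -> V) * (F -> F) :=
  let cF' := factor_step c.1 c.2 in (var_step c.1 cF', cF').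

Definition same_partition (T C C' : finType) (c : T -> C) (c' : T -> C') : bool :=
  [forall x, forall y, (c x == c y) == (c' x == c' y)].

Fixpoint cp_loop (fuel : nat) (c : (V -> V) * (F -> F)) : (V -> V) * (F -> F) :=
  match fuel with
  | 0 => c
  | n.+1 => let c' := cp_step c in
            if same_partition c.1 c'.1 && same_partition c.2 c'.2 then c'
            else cp_loop n c'
  end.

(* CP with given initial factor colours; the fuel bound is never reached
   before stabilisation, since each non-final round strictly refines one
   of the two partitions *)
Definition CP_from (cF0 : F -> F) : (V -> V) * (F -> F) :=
  cp_loop (#|V| + #|F| + 1) (init_varcol, cF0).

Definition pot_col (f : F) : F :=
  odflt f [pick g | same_pot g f].

Definition CP : (V -> V) * (F -> F) := CP_from pot_col.

Definition recol (c : F -> F) (S : {set F}) (col : F) : F -> F :=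
  fun x => if x \in S then col else c x.

(* steps (1)+(2): known factors by potentials, unknown ones unique *)
Definition lifg_col12 (f : F) : F :=
  if known f then odflt f [pick g | known g && same_pot g f] else f.

Definition Cset (fi : F) : {set F} :=
  [set fj | (fj != fi) && known fj && poss_ident fi fj].

Definition lifg_step3 (c : F -> F) : F -> F :=
  foldl (fun c fi =>
           if unknown fi then
             recol c [set fj | (fj != fi) && unknown fj && poss_ident fi fj] (c fi)
           else c) c (enum F).

Definition pairwise_pi (S : {set F}) : bool :=
  [forall x in S, forall y in S, (x != y) ==> poss_ident x y].

(* a maximal (maximum-cardinality) pairwise possibly identical subset *)
Definition Cmax (fi : F) : {set F} :=
  [arg max_(S > set0 | (S \subset Cset fi) && pairwise_pi S) #|S|]%N.

Definition lifg_step4 (theta : R) (c : F -> F) : F -> F :=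
  foldl (fun c fi =>
           if unknown fi && (theta * #|Cset fi|%:R <= #|Cmax fi|%:R)
           then recol c (Cmax fi) (c fi) else c) c (enum F).

Definition LIFG (theta : R) : (V -> V) * (F -> F) :=
  CP_from (lifg_step4 theta (lifg_step3 lifg_col12)).

End FG.

Definition same_grouping (V F : finType)
  (a b : (V -> V) * (F -> F)) : Prop :=
  (forall x y : V, (a.1 x == a.1 y) = (b.1 x == b.1 y)) /\
  (forall f g : F, (a.2 f == a.2 g) = (b.2 f == b.2 g)).

From HB Require Import structures.
From mathcomp Require Import all_boot all_order all_algebra.
From mathcomp Require Import reals.
Import Order.TTheory GRing.Theory Num.Theory.
Local Open Scope ring_scope.

(* When every factor is known, steps (3) and (4) of LIFG only act around
   unknown factors and so change nothing, while steps (1)-(2) colour the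
   factors by their potentials exactly as CP does.  LIFG is then literally
   CP run from the same initial colours; well-formedness of the graph and
   the value of the threshold play no role. *)

Section AllFactorsKnown.

Variables (V F D : finType) (R : realType) (G : factorGraph V F D R).
Variable E : V -> option D.
Hypothesis all_known : forall f : F, known G f.

Lemma unknownF (f : F) : unknown G f = false.
Proof. by rewrite /unknown all_known. Qed.

Lemma lifg_step3_id (c : F -> F) : lifg_step3 G E c = c.
Proof.
by rewrite /lifg_step3; elim: (enum F) c => //= fi s IHs c; rewrite unknownF.
Qed.

Lemma lifg_step4_id (theta : R) (c : F -> F) : lifg_step4 G E theta c = c.
Proof.
by rewrite /lifg_step4; elim: (enum F) c => //= fi s IHs c; rewrite unknownF.
Qed.

Lemma lifg_col12_pot_col : lifg_col12 G = pot_col G.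
Proof.
apply: boolp.funext => f; rewrite /lifg_col12 /pot_col all_known.
by congr odflt; apply: eq_pick => g; rewrite all_known.
Qed.

Lemma LIFG_CP (theta : R) : LIFG G E theta = CP G E.
Proof. by rewrite /LIFG lifg_step3_id lifg_step4_id lifg_col12_pot_col. Qed.

End AllFactorsKnown.

Theorem mainTheorem2 (V F D : finType) (R : realType)
  (G : factorGraph V F D R) (E : V -> option D) (theta : R) :
  wf_fg G E -> 0 <= theta <= 1 ->
  (forall f : F, known G f) ->
  same_grouping (CP G E) (LIFG G E theta).
Proof. by move=> _ _ all_known; rewrite LIFG_CP //; split. Qed.
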